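(* Let $\sigma>0$, $\lambda\ne0$, $T>0$, and let $\kappa(t,s)=\frac{\sigma^2}{\lambda^2+\sigma^2t}\mathbbm{1}_{s\le t}$ for $s,t\in[0,T]$ (this is $\lambda^{-2}\tilde K^{t,\lambda}(t,s)\mathbbm 1_{s\le t}$ for the constant covariance $K\equiv\sigma^2$). Define $H(t,s)=\sum_{n\ge0}\kappa^{(n+1)}(t,s)$, where $\kappa^{(1)}=\kappa$ and $\kappa^{(n+1)}(t,s)=\int_s^t\kappa(t,v)\kappa^{(n)}(v,s)\,dv$. Then \[ H(t,s)=\frac{\sigma^2}{\lambda^2+\sigma^2s}\mathbbm 1_{s\le t}. \] *)

From Stdlib Require Import Reals.
From Coquelicot Require Import Coquelicot.
Open Scope R_scope.

Definition kappa (sigma lambda : R) (t s : R) : R :=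
  if Rle_dec s t then sigma ^ 2 / (lambda ^ 2 + sigma ^ 2 * t) else 0.

(* kappa_iter n = kappa^{(n+1)}:
   kappa^{(1)} = kappa,
   kappa^{(n+1)}(t,s) = int_s^t kappa(t,v) kappa^{(n)}(v,s) dv  (Riemann integral) *)
Fixpoint kappa_iter (sigma lambda : R) (n : nat) : R -> R -> R :=
  match n with
  | O => kappa sigma lambda
  | S m => fun t s =>
      RInt (fun v => kappa sigma lambda t v * kappa_iter sigma lambda m v s) s t
  end.

Definition H (sigma lambda : R) (t s : R) : R :=
  Series (fun n => kappa_iter sigma lambda n t s).

(** With [w v = lambda^2 + sigma^2 v], the kernel [sigma^2 / w v] is the
    derivative of [ln (w v)].  Hence the iterated kernels are the terms of an
    exponential series: [kappa^(n+1)(t,s) = kappa(t,s) L^n / n!] with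
    [L = ln (w t) - ln (w s)], and their sum is
    [kappa(t,s) e^L = sigma^2 / w s] for [s <= t]. *)

From Stdlib Require Import Reals Lra Lia Factorial.
From Coquelicot Require Import Coquelicot.
Open Scope R_scope.

Lemma is_derive_log_power (a b c x : R) (n : nat) : 0 < a + b * x ->
  is_derive (fun v => (ln (a + b * v) - c) ^ S n / INR (fact (S n))) x
    (b / (a + b * x) * ((ln (a + b * x) - c) ^ n / INR (fact n))).
Proof.
  intros Hx. auto_derive; [lra|].
  change (fact n + n * fact n)%nat with (fact (S n)).
  change (match n with O => 1 | S _ => INR n + 1 end) with (INR (S n)).
  rewrite fact_simpl, mult_INR.
  (* [field] does not accept powers with a variable exponent. *)
  unfold Rminus; generalize ((ln (a + b * x) + - c) ^ n); intros p.
  field; repeat split; try apply INR_fact_neq_0; try apply not_0_INR; lia || lra.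
Qed.

Lemma is_RInt_log_power (a b c s t : R) (n : nat) :
  (forall v, Rmin s t <= v <= Rmax s t -> 0 < a + b * v) ->
  is_RInt (fun v => b / (a + b * v) * ((ln (a + b * v) - c) ^ n / INR (fact n))) s t
    ((ln (a + b * t) - c) ^ S n / INR (fact (S n))
     - (ln (a + b * s) - c) ^ S n / INR (fact (S n))).
Proof.
  intros Hpos.
  apply (is_RInt_derive (fun v => (ln (a + b * v) - c) ^ S n / INR (fact (S n)))).
  - intros v Hv. exact (is_derive_log_power a b c v n (Hpos v Hv)).
  - intros v Hv. specialize (Hpos v Hv).
    apply (ex_derive_continuous (K := R_AbsRing) (V := R_NormedModule)).
    auto_derive. repeat split; lra.
Qed.

Lemma kappa_iter_eq0 (sigma lambda t s : R) (n : nat) :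
  t < s -> kappa_iter sigma lambda n t s = 0.
Proof.
  intros Hts. destruct n as [|n]; simpl.
  - unfold kappa. destruct (Rle_dec s t); [lra | reflexivity].
  - rewrite (RInt_ext _ (fun _ => 0)), RInt_const.
    + exact (scal_zero_r (t - s)).
    + intros v Hv. rewrite Rmin_right, Rmax_left in Hv by lra.
      unfold kappa. destruct (Rle_dec v t); [lra | apply Rmult_0_l].
Qed.

Section ConstantCovariance.

Variables sigma lambda : R.
Hypothesis lambda_neq0 : lambda <> 0.

Local Notation w v := (lambda ^ 2 + sigma ^ 2 * v).
Local Notation log_gap t s := (ln (w t) - ln (w s)).

Lemma weight_pos (v : R) : 0 <= v -> 0 < w v.
Proof.
  intros Hv. pose proof (pow_nonzero lambda 2 lambda_neq0).
  pose proof (pow2_ge_0 lambda). pose proof (pow2_ge_0 sigma). nra.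
Qed.

Lemma kappa_iter_closed_form (n : nat) (t s : R) : 0 <= s <= t ->
  kappa_iter sigma lambda n t s =
    sigma ^ 2 / w t * (log_gap t s ^ n / INR (fact n)).
Proof.
  revert t. induction n as [|n IH]; intros t Hst.
  - simpl kappa_iter. change (INR (fact 0)) with 1. unfold kappa.
    destruct (Rle_dec s t); [|lra].
    field. apply Rgt_not_eq, weight_pos. lra.
  - simpl kappa_iter.
    assert (Hint := is_RInt_scal _ _ _ (sigma ^ 2 / w t) _
      (is_RInt_log_power (lambda ^ 2) (sigma ^ 2) (ln (w s)) s t n
         (fun v Hv => weight_pos v ltac:(rewrite Rmin_left in Hv; lra)))).
    rewrite Rminus_diag, pow_i in Hint by lia.
    erewrite is_RInt_unique; [| eapply is_RInt_ext; [| exact Hint]].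
    + change (scal ?k ?x) with (k * x). rewrite Rdiv_0_l, Rminus_0_r. reflexivity.
    + intros v Hv. rewrite Rmin_left, Rmax_right in Hv by lra.
      rewrite IH by lra. unfold kappa.
      destruct (Rle_dec v t); [reflexivity | lra].
Qed.

Lemma is_series_kappa_iter (t s : R) : 0 <= s ->
  is_series (fun n => kappa_iter sigma lambda n t s)
    (kappa sigma lambda t s * exp (log_gap t s)).
Proof.
  intros Hs.
  eapply is_series_ext;
    [|exact (is_series_scal (kappa sigma lambda t s) _ _ (is_exp_Reals (log_gap t s)))].
  intros n; cbv beta. change (scal ?k ?x) with (k * x). rewrite pow_n_pow.
  destruct (Rle_dec s t) as [Hst | Hts].
  - rewrite kappa_iter_closed_form by lra. unfold kappa.
    destruct (Rle_dec s t); [reflexivity | contradiction].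
  - rewrite kappa_iter_eq0 by lra. unfold kappa.
    destruct (Rle_dec s t); [contradiction | apply Rmult_0_l].
Qed.

Lemma kappa_mul_exp_log_gap (t s : R) : 0 <= s ->
  kappa sigma lambda t s * exp (log_gap t s) =
    (if Rle_dec s t then sigma ^ 2 / w s else 0).
Proof.
  intros Hs. unfold kappa. destruct (Rle_dec s t) as [Hst | Hts]; [|ring].
  pose proof (weight_pos s Hs). pose proof (weight_pos t ltac:(lra)).
  unfold Rminus. rewrite exp_plus, exp_Ropp, !exp_ln by lra.
  field. lra.
Qed.

End ConstantCovariance.

Theorem lemma5p2 (sigma lambda T : R) :
  0 < sigma -> lambda <> 0 -> 0 < T ->
  forall t s : R, 0 <= t <= T -> 0 <= s <= T ->
    ex_series (fun n => kappa_iter sigma lambda n t s) /\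
    H sigma lambda t s =
      (if Rle_dec s t then sigma ^ 2 / (lambda ^ 2 + sigma ^ 2 * s) else 0).
Proof.
  intros _ Hlambda _ t s _ Hs.
  assert (Hsum := is_series_kappa_iter sigma lambda Hlambda t s (proj1 Hs)).
  rewrite kappa_mul_exp_log_gap in Hsum by (exact Hlambda || lra).
  split.
  - eexists. exact Hsum.
  - exact (is_series_unique _ _ Hsum).
Qed.
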